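(* Let $\varphi:\mathbb{R}^n\times\mathbb{R}^m\to\mathbb{R}\cup\{+\infty\}$ be a closed proper convex function and $L(x,\lambda)=\inf_u\{\varphi(x,u)-\langle\lambda,u\rangle\}$. Let $(x^*,\lambda^* )$ be a saddle point of $L$, i.e. $L(x^*,\lambda)\leqslant L(x^*,\lambda^* )\leqslant L(x,\lambda^* )$ for all $x,\lambda$. Let $H\in\mathbb{R}^{m\times m}$ be symmetric positive definite and let $(A_k),(a_k),(b_k),(c_k)$, $k\geqslant0$, be real sequences with $a_k>0$, $b_k\geqslant0$, $c_k>0$ and $$A_{k+1}-A_k=a_k,\quad A_k=a_kb_k,\quad A_0=b_0=0,\quad c_k\geqslant a_k.$$ Let $\lambda_0\in\mathbb{R}^m$, $z_0=\lambda_0$, and for $k\geqslant0$ $$\tilde\lambda_{k+1}=\frac{1}{b_k+1}z_k+\frac{b_k}{b_k+1}\lambda_k,$$ $$(x_{k+1},u_{k+1})\in\arg\min_{x,u}\Big\{\varphi(x,u)-\langle\tilde\lambda_{k+1},u\rangle+\frac{c_k}{2(b_k+1)}\|u\|_H^2\Big\},$$ $$\lambda_{k+1}=\tilde\lambda_{k+1}-\frac{c_k}{b_k+1}Hu_{k+1},\qquad z_{k+1}=z_k+\frac{a_k}{c_k}(b_k+1)(\lambda_{k+1}-\tilde\lambda_{k+1})\;(=z_k-a_kHu_{k+1}),$$ where the minimizers are assumed to exist. Then for every $k\geqslant1$, $$L(x^*,\lambda^* )-L(x_k,\lambda_k)\leqslant\frac{\|\lambda_0-\lambda^*\|^2_{H^{-1}}}{2A_k},$$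 and for every $k\geqslant0$, $$\min_{0\leqslant j\leqslant k}\|u_{j+1}\|_H^2\leqslant\frac{\|\lambda_0-\lambda^*\|^2_{H^{-1}}}{\sum_{j=0}^ka_j^2}.$$
   Context: $\|u\|_M^2=u^{\mathrm T}Mu$ for a symmetric positive definite matrix $M$. $\varphi$ plays the role of a perturbation function of an objective $f(x)=\varphi(x,0)$. *)

From HB Require Import structures.
From mathcomp Require Import all_boot all_order all_algebra.
From mathcomp Require Import all_classical all_reals ereal topology normedtype sequences.
Set Implicit Arguments. Unset Strict Implicit. Unset Printing Implicit Defensive.
Import Order.TTheory GRing.Theory Num.Theory.
Import numFieldNormedType.Exports.
Local Open Scope ring_scope.
Local Open Scope classical_set_scope.

Definition ip (R : realType) (m : nat) (v w : 'cV[R]_m) : R := (v^T *m w) 0 0.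

Definition sqnormM (R : realType) (m : nat) (M : 'M[R]_m) (u : 'cV[R]_m) : R :=
  (u^T *m M *m u) 0 0.

Definition spd (R : realType) (m : nat) (M : 'M[R]_m) : Prop :=
  M^T = M /\ forall u : 'cV[R]_m, u != 0 -> 0 < sqnormM M u.

Definition proper_fun (R : realType) (n m : nat) (phi : 'cV[R]_n -> 'cV[R]_m -> \bar R)
  : Prop :=
  (forall x u, phi x u != -oo%E) /\ exists x u, phi x u != +oo%E.

Definition convex_fun (R : realType) (n m : nat) (phi : 'cV[R]_n -> 'cV[R]_m -> \bar R)
  : Prop :=
  forall (x1 x2 : 'cV[R]_n) (u1 u2 : 'cV[R]_m) (t : R), 0 <= t <= 1 ->
    (phi (t *: x1 + (1 - t) *: x2)%R (t *: u1 + (1 - t) *: u2)%R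
     <= t%:E * phi x1 u1 + (1 - t)%:E * phi x2 u2)%E.

(* closed = epigraph closed in R^n x R^m x R (sequential closedness, with
   convergence in R^n, R^m taken componentwise) *)
Definition closed_fun (R : realType) (n m : nat) (phi : 'cV[R]_n -> 'cV[R]_m -> \bar R)
  : Prop :=
  forall (X : nat -> 'cV[R]_n) (U : nat -> 'cV[R]_m) (T : nat -> R)
         (x : 'cV[R]_n) (u : 'cV[R]_m) (t : R),
    (forall k, (phi (X k) (U k) <= (T k)%:E)%E) ->
    (forall i, (fun k => X k i ord0) @ \oo --> (x i ord0 : R)) ->
    (forall i, (fun k => U k i ord0) @ \oo --> (u i ord0 : R)) ->
    T @ \oo --> t ->
    (phi x u <= t%:E)%E.

Definition lagr (R : realType) (n m : nat) (phi : 'cV[R]_n -> 'cV[R]_m -> \bar R)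
  (x : 'cV[R]_n) (lam : 'cV[R]_m) : \bar R :=
  ereal_inf [set (phi x u - (ip lam u)%:E)%E | u in [set: 'cV[R]_m]].

Definition saddle_point (R : realType) (n m : nat) (phi : 'cV[R]_n -> 'cV[R]_m -> \bar R)
  (xs : 'cV[R]_n) (ls : 'cV[R]_m) : Prop :=
  forall x lam, (lagr phi xs lam <= lagr phi xs ls)%E /\
                (lagr phi xs ls <= lagr phi x ls)%E.

(* The quadratic penalty of the (x, u)-step can be traded for the linear term it
   generates at the minimizer: by convexity, (x_{k+1}, u_{k+1}) minimizes
   phi(x, u) - <lambda_{k+1}, u> outright.  Hence L(x_{k+1}, lambda_{k+1}) is the
   value phi(x_{k+1}, u_{k+1}) - <lambda_{k+1}, u_{k+1}>, and any later iterate is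
   an admissible competitor in that infimum.  With L* the saddle value, the
   Lyapunov function
     E_k = A_k (L* - L(x_k, lambda_k)) + ||z_k - lambda*||^2_{H^-1} / 2
   then satisfies E_{k+1} + a_k^2 ||u_{k+1}||_H^2 / 2 <= E_k, by the saddle
   inequalities, A_{k+1} = a_k (b_k + 1) and c_k >= a_k.  Both bounds follow by
   telescoping, as both summands of E_k are nonnegative. *)

From HB Require Import structures.
From mathcomp Require Import all_boot all_order all_algebra.
From mathcomp Require Import all_classical all_reals ereal topology normedtype sequences.
From mathcomp Require Import ring lra.
Import Order.TTheory GRing.Theory Num.Theory.
Import numFieldNormedType.Exports.
Local Open Scope ring_scope.

Section InnerProduct.
Context {R : realType} {m : nat}.
Implicit Types (v w y : 'cV[R]_m) (M : 'M[R]_m).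

Lemma ipE v w : ip v w = \sum_i v i 0 * w i 0.
Proof. by rewrite /ip !mxE; apply: eq_bigr => i _; rewrite !mxE. Qed.

Lemma ipC v w : ip v w = ip w v.
Proof. by rewrite !ipE; apply: eq_bigr => i _; rewrite mulrC. Qed.

Lemma ipDl v w y : ip (v + w) y = ip v y + ip w y.
Proof. by rewrite !ipE -big_split; apply: eq_bigr => i _; rewrite !mxE mulrDl. Qed.

Lemma ipBl v w y : ip (v - w) y = ip v y - ip w y.
Proof. by rewrite !ipE -sumrB; apply: eq_bigr => i _; rewrite !mxE mulrBl. Qed.

Lemma ipZl (t : R) v w : ip (t *: v) w = t * ip v w.
Proof. by rewrite !ipE mulr_sumr; apply: eq_bigr => i _; rewrite !mxE mulrA. Qed.

Lemma ipDr v w y : ip y (v + w) = ip y v + ip y w.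
Proof. by rewrite ipC ipDl ![ip _ y]ipC. Qed.

Lemma ipBr v w y : ip y (v - w) = ip y v - ip y w.
Proof. by rewrite ipC ipBl ![ip _ y]ipC. Qed.

Lemma ipZr (t : R) v w : ip w (t *: v) = t * ip w v.
Proof. by rewrite ipC ipZl ipC. Qed.

Lemma ipMl M v w : ip (M *m v) w = ip v (M^T *m w).
Proof. by rewrite /ip trmx_mul mulmxA. Qed.

Lemma sqnormME M v : sqnormM M v = ip v (M *m v).
Proof. by rewrite /sqnormM /ip mulmxA. Qed.

Lemma sqnormM_lerp M (t : R) v w : M^T = M ->
  sqnormM M (t *: v + (1 - t) *: w) =
  sqnormM M w + 2 * t * ip (v - w) (M *m w) + t ^+ 2 * sqnormM M (v - w).
Proof.
move=> symM; have -> : t *: v + (1 - t) *: w = w + t *: (v - w).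
  by rewrite scalerBl scale1r scalerBr addrCA.
have symip y : ip w (M *m y) = ip y (M *m w) by rewrite ipC ipMl symM.
move: (v - w) => d.
rewrite !sqnormME mulmxDr -scalemxAr !ipDl !ipDr !ipZl !ipZr symip; ring.
Qed.

Lemma spd_sqnormM_ge0 M v : spd M -> 0 <= sqnormM M v.
Proof.
case=> _ posM; have [->|/posM/ltW //] := eqVneq v 0.
by rewrite sqnormME mulmx0 /ip mulmx0 mxE.
Qed.

Lemma spd_unitmx M : spd M -> M \in unitmx.
Proof.
move=> [symM posM]; rewrite -row_free_unit -kermx_eq0; apply/negPn/negP.
case/rowV0Pn => r /sub_kermxP rM0 r_neq0.
have : r^T != 0 by rewrite -(inj_eq (@trmx_inj _ _ _)) trmxK linear0.
move/posM; rewrite sqnormME -{1}symM -trmx_mul rM0 linear0 /ip mulmx0 mxE.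
by rewrite ltxx.
Qed.

Lemma spd_sqnormM_invmx_ge0 M v : spd M -> 0 <= sqnormM (invmx M) v.
Proof.
move=> spdM; have := spd_sqnormM_ge0 _ (invmx M *m v) spdM.
by rewrite !sqnormME (mulKVmx (spd_unitmx _ spdM)) ipC.
Qed.

Lemma sqnormM_invmx_shift M (t : R) v w : spd M ->
  sqnormM (invmx M) (w - t *: (M *m v)) =
  sqnormM (invmx M) w - 2 * t * ip w v + t ^+ 2 * sqnormM M v.
Proof.
move=> spdM; have [symM _] := spdM; have unitM := spd_unitmx _ spdM.
rewrite !sqnormME mulmxBr -scalemxAr (mulKmx unitM) !ipBl !ipBr !ipZl !ipZr.
rewrite ipMl symM (mulKVmx unitM) [ip (M *m _) v]ipC [ip v w]ipC; ring.
Qed.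

End InnerProduct.

Lemma ge0_of_ge0_perturbed (R : realFieldType) (X Y : R) :
  (forall t, 0 < t -> t <= 1 -> 0 <= X + t * Y) -> 0 <= X.
Proof.
move=> h; rewrite leNgt; apply/negP => X_lt0.
have Y_ge0 := normr_ge0 Y.
pose t := - X / (- X + `|Y|).
have tD : t * (- X + `|Y|) = - X by rewrite /t mulfVK // gt_eqF //; lra.
have t_gt0 : 0 < t by rewrite /t divr_gt0 //; lra.
have t_le1 : t <= 1 by rewrite /t ler_pdivrMr ?mul1r; lra.
have := h t t_gt0 t_le1.
have : t * Y <= t * `|Y| by rewrite ler_pM2l // ler_norm.
nra.
Qed.

Section Lagrangian.
Context {R : realType} {n m : nat}.
Variable phi : 'cV[R]_n -> 'cV[R]_m -> \bar R.

Lemma lagr_le x lam u : (lagr phi x lam <= phi x u - (ip lam u)%:E)%E.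
Proof. by apply: ereal_inf_lbound; exists u. Qed.

Lemma le_lagr x lam r :
  (forall u, r <= phi x u - (ip lam u)%:E)%E -> (r <= lagr phi x lam)%E.
Proof. by move=> le_r; apply/ereal_infP => _ [u _ <-]. Qed.

Lemma argmin_quadratic_shift (M : 'M[R]_m) (l : 'cV[R]_m) (s p0 : R) x0 u0 :
  convex_fun phi -> M^T = M -> phi x0 u0 = p0%:E ->
  (forall x' u', (phi x0 u0 - (ip l u0)%:E + (s * sqnormM M u0)%:E <=
     phi x' u' - (ip l u')%:E + (s * sqnormM M u')%:E)%E) ->
  forall x' u', ((p0 - ip (l - (2 * s) *: (M *m u0)) u0)%:E <=
     phi x' u' - (ip (l - (2 * s) *: (M *m u0)) u')%:E)%E.
Proof.
move=> convex_phi symM phi0 min0 x' u'.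
case phi': (phi x' u') => [p'| |]; last 2 first.
- by rewrite leey.
- by have := min0 x' u'; rewrite phi0 phi' -!EFinD.
rewrite -EFinB lee_fin.
set l' := l - _ *: _.
suff : 0 <= p' - p0 - ip l' (u' - u0) by rewrite ipBr; lra.
(* By convexity and minimality, moving a fraction t from (x0, u0) towards (x', u')
   shows t * (D + t * s * ||u' - u0||_H^2) >= 0 for the gap D in question. *)
apply: (@ge0_of_ge0_perturbed _ _ (s * sqnormM M (u' - u0))) => t t_gt0 t_le1.
rewrite -(pmulr_rge0 _ t_gt0).
have t01 : 0 <= t <= 1 by rewrite ltW.
have := convex_phi x' x0 u' u0 t t01; rewrite phi0 phi' -!EFinM -EFinD.
move=> /(leeD2r ((- ip l (t *: u' + (1 - t) *: u0))%:E +
   (s * sqnormM M (t *: u' + (1 - t) *: u0))%:E)).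
rewrite addeA => /(le_trans (min0 _ _)) descent.
rewrite phi0 -!EFinD lee_fin sqnormM_lerp // !ipDr !ipZr ipBl in descent.
rewrite ipBr /l' !ipBl !ipZl ![ip (M *m u0) _]ipC.
lra.
Qed.
End Lagrangian.

Section AcceleratedProximalMethod.
Context {R : realType} {n m : nat}.
Variable phi : 'cV[R]_n -> 'cV[R]_m -> \bar R.
Variables (xs : 'cV[R]_n) (ls : 'cV[R]_m) (H : 'M[R]_m) (A a b c : nat -> R).
Variables (x : nat -> 'cV[R]_n) (u lam lamt z : nat -> 'cV[R]_m).
Hypotheses (proper_phi : proper_fun phi) (convex_phi : convex_fun phi).
Hypotheses (saddle : saddle_point phi xs ls) (spdH : spd H).
Hypotheses (a_gt0 : forall k, 0 < a k) (b_ge0 : forall k, 0 <= b k) (c_gt0 : forall k, 0 < c k).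
Hypotheses (A_succ : forall k, A k.+1 - A k = a k) (A_ab : forall k, A k = a k * b k).
Hypotheses (A0 : A 0 = 0) (a_le_c : forall k, a k <= c k).
Hypothesis z0 : z 0 = lam 0.
Hypothesis lamt_def :
  forall k, lamt k.+1 = (b k + 1)^-1 *: z k + (b k / (b k + 1)) *: lam k.
Hypothesis argmin_step : forall k x' u',
  (phi (x k.+1) (u k.+1) - (ip (lamt k.+1) (u k.+1))%:E
     + (c k / (2 * (b k + 1)) * sqnormM H (u k.+1))%:E
   <= phi x' u' - (ip (lamt k.+1) u')%:E + (c k / (2 * (b k + 1)) * sqnormM H u')%:E)%E.
Hypothesis lam_def :
  forall k, lam k.+1 = lamt k.+1 - (c k / (b k + 1)) *: (H *m u k.+1).
Hypothesis z_def :
  forall k, z k.+1 = z k + (a k / c k * (b k + 1)) *: (lam k.+1 - lamt k.+1).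

Let b1_gt0 k : 0 < b k + 1.
Proof. by have := b_ge0 k; lra. Qed.

Let A_ge0 k : 0 <= A k.
Proof. by rewrite A_ab mulr_ge0 // ltW. Qed.

Let f k := fine (phi (x k) (u k)).

Lemma phi_iter_fin k : phi (x k.+1) (u k.+1) = (f k.+1)%:E.
Proof.
case: proper_phi => not_ninfty [x' [u' fin']]; rewrite /f.
case phik: (phi (x k.+1) (u k.+1)) => [r| |] //.
- have := argmin_step k x' u'; rewrite phik.
  by case: (phi x' u') fin'.
- by have := not_ninfty (x k.+1) (u k.+1); rewrite phik.
Qed.

(* For k = 0 this is a junk value, which always comes weighted by A 0 = 0. *)
Let L k := f k - ip (lam k) (u k).

Lemma L_iter_le k x' u' : ((L k.+1)%:E <= phi x' u' - (ip (lam k.+1) u')%:E)%E.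
Proof.
have lamE : lam k.+1 = lamt k.+1 - (2 * (c k / (2 * (b k + 1)))) *: (H *m u k.+1).
  by rewrite lam_def; congr (_ - _ *: _); field; rewrite lt0r_neq0.
by rewrite /L lamE; apply: argmin_quadratic_shift (phi_iter_fin k) _ _ _ => //; case: spdH.
Qed.

Lemma lagr_iterE k : lagr phi (x k.+1) (lam k.+1) = (L k.+1)%:E.
Proof.
apply/eqP; rewrite eq_le le_lagr ?andbT; last exact: L_iter_le.
by rewrite /L EFinB -phi_iter_fin lagr_le.
Qed.

Let lagr_saddle_ge k : ((L k.+1)%:E <= lagr phi xs ls)%E.
Proof. exact/(le_trans _ (saddle xs (lam k.+1)).1)/le_lagr/L_iter_le. Qed.

Let lagr_saddle_le k : (lagr phi xs ls <= (f k.+1 - ip ls (u k.+1))%:E)%E.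
Proof. by apply: le_trans (saddle (x k.+1) ls).2 _; rewrite EFinB -phi_iter_fin lagr_le. Qed.

Let Ls := fine (lagr phi xs ls).

Lemma lagr_saddleE : lagr phi xs ls = Ls%:E.
Proof.
have := lagr_saddle_ge 0; have := lagr_saddle_le 0; rewrite /Ls.
by case: (lagr phi xs ls).
Qed.

Lemma L_iter_le_saddle k : L k.+1 <= Ls.
Proof. by rewrite -lee_fin -lagr_saddleE. Qed.

Lemma saddle_le_iter k : Ls <= f k.+1 - ip ls (u k.+1).
Proof. by rewrite -lee_fin -lagr_saddleE. Qed.

Lemma z_succ k : z k.+1 = z k - a k *: (H *m u k.+1).
Proof.
rewrite z_def lam_def addrAC subrr add0r scalerN scalerA; congr (_ - _ *: _).
by field; rewrite !lt0r_neq0.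
Qed.

Let N w := sqnormM (invmx H) w.
Let q k := sqnormM H (u k.+1).
Let E k := A k * (Ls - L k) + N (z k - ls) / 2.

Lemma E_succ k : E k.+1 - E k =
  a k * (Ls - (f k.+1 - ip ls (u k.+1)))
  + A k * (L k - (f k.+1 - ip (lam k) (u k.+1)))
  - a k * (c k - a k) * q k - a k ^+ 2 / 2 * q k.
Proof.
have A_succE : A k.+1 = a k * (b k + 1) by rewrite -[A k.+1](subrK (A k)) A_succ A_ab; ring.
have zE : z k.+1 - ls = (z k - ls) - a k *: (H *m u k.+1) by rewrite z_succ addrAC.
have lamE : ip (lam k.+1) (u k.+1) = (b k + 1)^-1 * ip (z k) (u k.+1)
    + b k / (b k + 1) * ip (lam k) (u k.+1) - c k / (b k + 1) * q k.
  by rewrite lam_def lamt_def ipBl ipDl !ipZl /q sqnormME [ip (H *m _) _]ipC.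
rewrite /E /N zE sqnormM_invmx_shift // A_succE A_ab {1}/L lamE ipBl.
by rewrite -/(q k); field; rewrite lt0r_neq0.
Qed.

Let q_ge0 k : 0 <= q k.
Proof. exact: spd_sqnormM_ge0. Qed.

Let N_ge0 w : 0 <= N w.
Proof. exact: spd_sqnormM_invmx_ge0. Qed.

Lemma E_decr k : E k.+1 + a k ^+ 2 / 2 * q k <= E k.
Proof.
have saddle_gap : 0 <= a k * (f k.+1 - ip ls (u k.+1) - Ls).
  by rewrite mulr_ge0 ?subr_ge0 ?saddle_le_iter // ltW.
have descent : A k * (L k - (f k.+1 - ip (lam k) (u k.+1))) <= 0.
  case: k {saddle_gap} => [|k]; first by rewrite A0 mul0r.
  have := L_iter_le k (x k.+2) (u k.+2); rewrite phi_iter_fin -EFinB lee_fin.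
  by rewrite -subr_le0; apply: mulr_ge0_le0.
have slack : 0 <= a k * (c k - a k) * q k.
  by rewrite !mulr_ge0 ?subr_ge0 // ltW.
have := E_succ k; lra.
Qed.

Lemma E_telescope k : E k + (\sum_(j < k) a j ^+ 2 * q j) / 2 <= N (lam 0 - ls) / 2.
Proof.
elim: k => [|k IH]; first by rewrite big_ord0 mul0r addr0 /E A0 mul0r add0r z0.
by rewrite big_ord_recr /=; have := E_decr k; lra.
Qed.

Let weighted_gap_ge0 k : 0 <= A k * (Ls - L k).
Proof.
case: k => [|k]; first by rewrite A0 mul0r.
by rewrite mulr_ge0 // subr_ge0 L_iter_le_saddle.
Qed.

Let weighted_residuals_ge0 k : 0 <= \sum_(j < k) a j ^+ 2 * q j.
Proof. by apply: sumr_ge0 => j _; rewrite mulr_ge0 ?sqr_ge0. Qed.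

Lemma lagr_gap_bound k : (1 <= k)%N ->
  (lagr phi xs ls - lagr phi (x k) (lam k)
     <= (sqnormM (invmx H) (lam 0 - ls) / (2 * A k))%:E)%E.
Proof.
case: k => [//|k] _; rewrite lagr_saddleE lagr_iterE -EFinB lee_fin.
have A_gt0 : 0 < A k.+1 by have := A_succ k; have := a_gt0 k; have := A_ge0 k; lra.
rewrite ler_pdivlMr ?mulr_gt0 //.
have := E_telescope k.+1; have := N_ge0 (z k.+1 - ls).
have := weighted_residuals_ge0 k.+1; rewrite /E /N; lra.
Qed.

Lemma min_residual_bound k :
  \big[Num.min/sqnormM H (u 1)]_(j < k.+1) sqnormM H (u j.+1)
    <= sqnormM (invmx H) (lam 0 - ls) / \sum_(j < k.+1) a j ^+ 2.
Proof.
have residuals_le : \sum_(j < k.+1) a j ^+ 2 * q j <= N (lam 0 - ls).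
  have := E_telescope k.+1; have := weighted_gap_ge0 k.+1.
  have := N_ge0 (z k.+1 - ls); rewrite /E; lra.
have sum_gt0 : 0 < \sum_(j < k.+1) a j ^+ 2.
  by rewrite big_ord_recl ltr_pwDl ?exprn_gt0 // sumr_ge0 // => j _; rewrite sqr_ge0.
rewrite ler_pdivlMr // mulr_sumr; apply: le_trans residuals_le.
by apply: ler_sum => j _; rewrite mulrC ler_wpM2l ?sqr_ge0 // bigmin_le.
Qed.

End AcceleratedProximalMethod.

Theorem theorem8 (R : realType) (n m : nat)
  (phi : 'cV[R]_n -> 'cV[R]_m -> \bar R)
  (xs : 'cV[R]_n) (ls : 'cV[R]_m) (H : 'M[R]_m)
  (A a b c : nat -> R)
  (x : nat -> 'cV[R]_n) (u lam lamt z : nat -> 'cV[R]_m) :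
  closed_fun phi -> proper_fun phi -> convex_fun phi ->
  saddle_point phi xs ls ->
  spd H ->
  (forall k, 0 < a k) -> (forall k, 0 <= b k) -> (forall k, 0 < c k) ->
  (forall k, A k.+1 - A k = a k) -> (forall k, A k = a k * b k) ->
  A 0 = 0 -> b 0 = 0 -> (forall k, a k <= c k) ->
  z 0 = lam 0 ->
  (forall k, lamt k.+1 = (b k + 1)^-1 *: z k + (b k / (b k + 1)) *: lam k) ->
  (forall k (x' : 'cV[R]_n) (u' : 'cV[R]_m),
     (phi (x k.+1) (u k.+1) - (ip (lamt k.+1) (u k.+1))%:E
        + (c k / (2 * (b k + 1)) * sqnormM H (u k.+1))%:E
      <= phi x' u' - (ip (lamt k.+1) u')%:E
        + (c k / (2 * (b k + 1)) * sqnormM H u')%:E)%E) ->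
  (forall k, lam k.+1 = lamt k.+1 - (c k / (b k + 1)) *: (H *m u k.+1)) ->
  (forall k, z k.+1 = z k + (a k / c k * (b k + 1)) *: (lam k.+1 - lamt k.+1)) ->
  (forall k, (1 <= k)%N ->
     (lagr phi xs ls - lagr phi (x k) (lam k)
       <= (sqnormM (invmx H) (lam 0 - ls) / (2 * A k))%:E)%E)
  /\
  (forall k,
     \big[Num.min/sqnormM H (u 1)]_(j < k.+1) sqnormM H (u j.+1)
       <= sqnormM (invmx H) (lam 0 - ls) / \sum_(j < k.+1) a j ^+ 2).
Proof.
move=> _ proper_phi convex_phi saddle spdH a_gt0 b_ge0 c_gt0 A_succ A_ab A0 _ a_le_c
  z0 lamt_def argmin_step lam_def z_def.
split.
- by apply: (lagr_gap_bound phi xs ls H A a b c x u lam lamt z).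
- by apply: (min_residual_bound phi xs ls H A a b c x u lam lamt z).
Qed.
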